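(* For every integer $n\ge 0$, \[ {}_{H}w_{n+1}(x)=x\frac{d}{dx}\Big((1+x)\,{}_{H}w_{n}(x)\Big)+x\,w_{n}(x). \]
   Context: $\genfrac{\{}{\}}{0pt}{}{n}{k}$ denotes the Stirling numbers of the second kind. The geometric polynomials are $w_n(x)=\sum_{k=0}^{n}\genfrac{\{}{\}}{0pt}{}{n}{k}k!\,x^k$ (so $w_0=1$). With $H_k=\sum_{i=1}^k 1/i$, the harmonic geometric polynomials are ${}_{H}w_n(x)=\sum_{k=1}^{n}\genfrac{\{}{\}}{0pt}{}{n}{k}k!\,H_k\,x^k$ (so ${}_Hw_0=0$). *)

From mathcomp Require Import all_boot all_order all_algebra.
Set Implicit Arguments. Unset Strict Implicit. Unset Printing Implicit Defensive.
Import Order.TTheory GRing.Theory Num.Theory.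
Local Open Scope ring_scope.

Fixpoint stirling2 (n k : nat) : nat :=
  match n, k with
  | 0, 0 => 1
  | 0, _.+1 => 0
  | _.+1, 0 => 0
  | n'.+1, k'.+1 => k'.+1 * stirling2 n' k'.+1 + stirling2 n' k'
  end%N.

Definition harmonic (R : numFieldType) (k : nat) : R :=
  \sum_(1 <= i < k.+1) (i%:R)^-1.

Definition geom_poly (R : numFieldType) (n : nat) : {poly R} :=
  \sum_(0 <= k < n.+1) ((stirling2 n k * k`!)%:R : R) *: 'X^k.

Definition hgeom_poly (R : numFieldType) (n : nat) : {poly R} :=
  \sum_(1 <= k < n.+1) (((stirling2 n k * k`!)%:R : R) * harmonic R k) *: 'X^k.

(* Compare coefficients of x^(k+1).  The Stirling recurrence
   {n+1 brace k+1} = (k+1) {n brace k+1} + {n brace k} splits the left-hand side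
   into two parts: the first is the coefficient of x hw_n', and the second,
   by (k+1)! H_(k+1) = (k+1) k! H_k + k!, is that of x (x hw_n)' + x w_n. *)

From mathcomp Require Import all_boot all_order all_algebra.
From mathcomp Require Import ring.
Import GRing.Theory Num.Theory.
Local Open Scope ring_scope.

Lemma stirling2_small (n k : nat) : (n < k)%N -> stirling2 n k = 0%N.
Proof.
elim: n k => [|n IHn] [|k] // /[!ltnS] ltnk /=.
by rewrite !IHn ?muln0 // ltnW.
Qed.

Lemma stirling2SS (n k : nat) :
  stirling2 n.+1 k.+1 = (k.+1 * stirling2 n k.+1 + stirling2 n k)%N.
Proof. by []. Qed.

Lemma coef_sum_monomials (R : nzSemiRingType) (F : nat -> R) (n k : nat) :
  (forall i, (n < i)%N -> F i = 0) ->
  (\sum_(0 <= i < n.+1) F i *: 'X^i : {poly R})`_k = F k.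
Proof.
move=> F_small; rewrite big_mkord -poly_def coef_poly.
by case: ltnP => // /F_small ->.
Qed.

Section HarmonicGeometric.

Variable R : numFieldType.

Lemma harmonic0 : harmonic R 0 = 0.
Proof. by rewrite /harmonic big_geq. Qed.

Lemma harmonicS (k : nat) : harmonic R k.+1 = harmonic R k + k.+1%:R^-1.
Proof. by rewrite /harmonic big_nat_recr. Qed.

Lemma fact_harmonicS (k : nat) :
  k.+1`!%:R * harmonic R k.+1 = k.+1%:R * (k`!%:R * harmonic R k) + k`!%:R.
Proof.
have k1_neq0 : k.+1%:R != 0 :> R by rewrite pnatr_eq0.
by rewrite harmonicS factS natrM mulrDr -mulrA mulrAC mulfV // mul1r.
Qed.

Lemma coef_geom_poly (n k : nat) :
  (geom_poly R n)`_k = (stirling2 n k)%:R * k`!%:R.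
Proof. by rewrite coef_sum_monomials ?natrM // => i /stirling2_small ->. Qed.

Lemma coef_hgeom_poly (n k : nat) :
  (hgeom_poly R n)`_k = (stirling2 n k)%:R * (k`!%:R * harmonic R k).
Proof.
have term0_eq0 : ((stirling2 n 0 * 0`!)%:R * harmonic R 0) *: 'X^0 = 0.
  by rewrite harmonic0 mulr0 scale0r.
rewrite -[hgeom_poly R n]add0r -term0_eq0 -big_ltn //.
rewrite coef_sum_monomials ?natrM ?mulrA // => i /stirling2_small ->.
by rewrite mul0n mul0r.
Qed.

End HarmonicGeometric.

Theorem proposition2 (R : numFieldType) (n : nat) :
  hgeom_poly R n.+1 =
    'X * ((1 + 'X) * hgeom_poly R n)^`() + 'X * geom_poly R n.
Proof.
apply/polyP => -[|k]; rewrite coefD !coefXM /=.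
  by rewrite coef_hgeom_poly harmonic0 !mulr0 addr0.
rewrite coef_deriv mulrDl mul1r coefD coefXM /= !coef_hgeom_poly coef_geom_poly.
rewrite stirling2SS fact_harmonicS natrD natrM.
ring.
Qed.
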